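(* Let $\{K_n\}$ be Kraus operators of an incoherent operation with respect to $I$. For every density matrix $\rho$ on $\mathcal H$, setting $p_n=\mathrm{Tr}[K_n\rho K_n^\dagger]$ and $\rho_n=K_n\rho K_n^\dagger/p_n$ for $p_n>0$, we have $$R_I(\rho)\ \ge\ \sum_{n:\,p_n>0}p_n\,R_I(\rho_n).$$
   Context: Fix a Hilbert space $\mathcal H$ of finite dimension $d$ with a fixed orthonormal basis $I=\{|i\rangle\}_{i=1}^d$. The set $\mathcal I$ of incoherent states consists of all density matrices $\sum_{i}p_i|i\rangle\langle i|$ with $p_i\ge0$, $\sum_ip_i=1$. An incoherent operation is a CPTP map $\Phi(\rho)=\sum_nK_n\rho K_n^\dagger$ with $\sum_nK_n^\dagger K_n=\mathbb 1$ such that $K_n\delta K_n^\dagger$ is diagonal in the basis $I$ for every $\delta\in\mathcal I$ and every $n$. For a density matrix $\rho$, let $\rho^{\mathrm{diag}}=\sum_i\langle i|\rho|i\rangle\,|i\rangle\langle i|$. For a pure state $|\psi\rangle=\sum_ia_i|i\rangle$ define $R_I(|\psi\rangle)=S\big((|\psi\rangle\langle\psi|)^{\mathrm{diag}}\big)=-\sum_i|a_i|^2\log_2|a_i|^2$, where $S$ is the von Neumann entropy. For a general density matrix $\rho$ define $R_I(\rho)=\min\sum_ep_eR_I(|\psi_e\rangle)$, the minimum over all finite pure-state decompositions $\rho=\sum_ep_e|\psi_e\rangle\langle\psi_e|$ with $p_e>0$, $\sum_ep_e=1$. *)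

From Stdlib Require Import Reals Lra ClassicalEpsilon.
Open Scope R_scope.

Record C := mkC { Cre : R ; Cim : R }.
Definition C0 : C := mkC 0 0.
Definition C1 : C := mkC 1 0.
Definition RtoC (x : R) : C := mkC x 0.
Definition Cadd (a b : C) : C := mkC (Cre a + Cre b) (Cim a + Cim b).
Definition Cmul (a b : C) : C :=
  mkC (Cre a * Cre b - Cim a * Cim b) (Cre a * Cim b + Cim a * Cre b).
Definition Cconj (a : C) : C := mkC (Cre a) (- Cim a).
Definition Cnorm2 (a : C) : R := Cre a * Cre a + Cim a * Cim a.

Fixpoint sumC (n : nat) (f : nat -> C) : C :=
  match n with O => C0 | S k => Cadd (sumC k f) (f k) end.
Fixpoint sumR (n : nat) (f : nat -> R) : R :=
  match n with O => 0 | S k => sumR k f + f k end.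

(** * Vectors and matrices on H = C^d, in the fixed basis I = {|i>}, i < d.
    Entries outside 0..d-1 are irrelevant. *)
Definition Vec := nat -> C.
Definition Mat := nat -> nat -> C.

Definition mat_mul (d : nat) (A B : Mat) : Mat :=
  fun i j => sumC d (fun k => Cmul (A i k) (B k j)).
Definition adjoint (A : Mat) : Mat := fun i j => Cconj (A j i).
Definition trace (d : nat) (A : Mat) : C := sumC d (fun i => A i i).
Definition id_mat : Mat := fun i j => if Nat.eqb i j then C1 else C0.
Definition scale_mat (c : R) (A : Mat) : Mat := fun i j => Cmul (RtoC c) (A i j).
Definition outer (psi : Vec) : Mat := fun i j => Cmul (psi i) (Cconj (psi j)).

Definition mat_eq (d : nat) (A B : Mat) : Prop :=
  forall i j, (i < d)%nat -> (j < d)%nat -> A i j = B i j.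

Definition quad (d : nat) (A : Mat) (v : Vec) : C :=
  sumC d (fun i => sumC d (fun j => Cmul (Cconj (v i)) (Cmul (A i j) (v j)))).

Definition hermitian (d : nat) (A : Mat) : Prop := mat_eq d A (adjoint A).
Definition psd (d : nat) (A : Mat) : Prop :=
  hermitian d A /\ forall v : Vec, 0 <= Cre (quad d A v).
Definition density (d : nat) (rho : Mat) : Prop :=
  psd d rho /\ trace d rho = C1.

Definition is_diag (d : nat) (A : Mat) : Prop :=
  forall i j, (i < d)%nat -> (j < d)%nat -> i <> j -> A i j = C0.

Definition incoherent (d : nat) (delta : Mat) : Prop :=
  exists p : nat -> R,
    (forall i, (i < d)%nat -> 0 <= p i) /\ sumR d p = 1 /\
    mat_eq d delta (fun i j => if Nat.eqb i j then RtoC (p i) else C0).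

Definition diag_part (rho : Mat) : Mat :=
  fun i j => if Nat.eqb i j then rho i i else C0.

Definition kraus_complete (d N : nat) (K : nat -> Mat) : Prop :=
  mat_eq d (fun i j => sumC N (fun n => mat_mul d (adjoint (K n)) (K n) i j)) id_mat.

Definition incoherent_kraus (d N : nat) (K : nat -> Mat) : Prop :=
  kraus_complete d N K /\
  forall delta, incoherent d delta ->
    forall n, (n < N)%nat -> is_diag d (mat_mul d (mat_mul d (K n) delta) (adjoint (K n))).

Definition xlog2 (x : R) : R := if Rle_dec x 0 then 0 else x * (ln x / ln 2).

(** R_I(|psi>) = S((|psi><psi|)^diag) = - sum_i |a_i|^2 log2 |a_i|^2 *)
Definition RI_pure (d : nat) (psi : Vec) : R :=
  - sumR d (fun i => xlog2 (Cnorm2 (psi i))).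

Definition normalized (d : nat) (psi : Vec) : Prop :=
  sumR d (fun i => Cnorm2 (psi i)) = 1.

Definition pure_decomposition (d : nat) (rho : Mat) (m : nat)
    (p : nat -> R) (psi : nat -> Vec) : Prop :=
  (forall e, (e < m)%nat -> 0 < p e) /\ sumR m p = 1 /\
  (forall e, (e < m)%nat -> normalized d (psi e)) /\
  mat_eq d rho (fun i j => sumC m (fun e => Cmul (RtoC (p e)) (outer (psi e) i j))).

Definition RI_costs (d : nat) (rho : Mat) (r : R) : Prop :=
  exists m p psi, pure_decomposition d rho m p psi /\
    r = sumR m (fun e => p e * RI_pure d (psi e)).

Definition is_glb (S : R -> Prop) (r : R) : Prop :=
  (forall x, S x -> r <= x) /\ (forall b, (forall x, S x -> b <= x) -> b <= r).

(** R_I(rho) = min over decompositions (taken as the greatest lower bound,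
    which coincides with the minimum since the minimum is attained). *)
Definition RI (d : nat) (rho : Mat) : R :=
  epsilon (inhabits 0) (fun r => is_glb (RI_costs d rho) r).

Definition kraus_prob (d : nat) (K : Mat) (rho : Mat) : R :=
  Cre (trace d (mat_mul d (mat_mul d K rho) (adjoint K))).

Definition kraus_post (d : nat) (K : Mat) (rho : Mat) : Mat :=
  scale_mat (/ kraus_prob d K rho) (mat_mul d (mat_mul d K rho) (adjoint K)).

(* Since R_I is a convex roof, pure states suffice: if rho = sum_e p_e |psi_e><psi_e|,
   the rescaled vectors K_n psi_e decompose rho_n, so p_n R_I(rho_n) is at most
   sum_e p_e |K_n psi_e|^2 S(diag of the normalized K_n psi_e), and it remains to show
   sum_n |K_n a|^2 S(diag K_n a / |K_n a|) <= S(diag a) for a unit vector a.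

   Put q_j = |a_j|^2 and x_(n,i) = |(K_n a)_i|^2.  Incoherence forces every column of K_n
   to have at most one nonzero entry, so the row supports of K_n are disjoint and their
   masses m_(n,i) = sum of q_j over the support of row i add up to at most 1.  Gibbs'
   inequality against the m_(n,i) bounds the left-hand side by
   sum_(n,i) x_(n,i) (- ln m_(n,i)); as - ln m_(n,i) <= - ln q_j on the support, a
   layer-cake argument that only uses sum_n K_n^dagger K_n = 1 bounds this in turn by
   sum_j q_j (- ln q_j).  Finally, a Cholesky-type factorization of rho provides a
   decomposition, so that R_I(rho) is the infimum of a nonempty set of costs. *)

From Stdlib Require Import Reals Lra Lia Psatz ClassicalEpsilon Classical Ring.
Open Scope R_scope.

Lemma C_ext (a b : C) : Cre a = Cre b -> Cim a = Cim b -> a = b.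
Proof. destruct a, b; simpl; intros -> ->; reflexivity. Qed.

Definition Copp (a : C) : C := mkC (- Cre a) (- Cim a).
Definition Csub (a b : C) : C := Cadd a (Copp b).

Lemma C_ring_theory : ring_theory C0 C1 Cadd Cmul Csub Copp (@eq C).
Proof.
  constructor; intros; apply C_ext; destruct x; try destruct y; try destruct z;
    unfold Cadd, Cmul, Csub, Copp, C0, C1; simpl; ring.
Qed.
Add Ring C_ring : C_ring_theory.

Ltac C_ext_ring := apply C_ext; simpl; ring.

Lemma Cconj_add a b : Cconj (Cadd a b) = Cadd (Cconj a) (Cconj b).
Proof. C_ext_ring. Qed.
Lemma Cconj_mul a b : Cconj (Cmul a b) = Cmul (Cconj a) (Cconj b).
Proof. C_ext_ring. Qed.
Lemma Cconj_opp a : Cconj (Copp a) = Copp (Cconj a).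
Proof. C_ext_ring. Qed.
Lemma Cconj_involutive a : Cconj (Cconj a) = a.
Proof. C_ext_ring. Qed.
Lemma Cconj_RtoC r : Cconj (RtoC r) = RtoC r.
Proof. C_ext_ring. Qed.
Lemma Cconj_C0 : Cconj C0 = C0.
Proof. C_ext_ring. Qed.
Lemma Cconj_eq0 a : Cconj a = C0 -> a = C0.
Proof. intro H; rewrite <- (Cconj_involutive a), H; apply Cconj_C0. Qed.
Lemma RtoC_mul a b : RtoC (a * b) = Cmul (RtoC a) (RtoC b).
Proof. C_ext_ring. Qed.

Lemma Cnorm2_nonneg a : 0 <= Cnorm2 a.
Proof. unfold Cnorm2; nra. Qed.
Lemma Cnorm2_C0 : Cnorm2 C0 = 0.
Proof. unfold Cnorm2; simpl; ring. Qed.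
Lemma Cnorm2_mul a b : Cnorm2 (Cmul a b) = Cnorm2 a * Cnorm2 b.
Proof. unfold Cnorm2; simpl; ring. Qed.
Lemma Cnorm2_RtoC_mul c z : Cnorm2 (Cmul (RtoC c) z) = c * c * Cnorm2 z.
Proof. unfold Cnorm2; simpl; ring. Qed.
Lemma Cre_conj_mul a : Cre (Cmul (Cconj a) a) = Cnorm2 a.
Proof. unfold Cnorm2; simpl; ring. Qed.
Lemma Cnorm2_eq0 a : Cnorm2 a = 0 -> a = C0.
Proof. destruct a as [x y]; unfold Cnorm2; simpl; intro H. apply C_ext; simpl; nra. Qed.
Lemma Cnorm2_pos a : a <> C0 -> 0 < Cnorm2 a.
Proof.
  intro H. destruct (Cnorm2_nonneg a) as [h|h]; auto.
  exfalso; apply H, Cnorm2_eq0; auto.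
Qed.
Lemma Cmul_integral a b : Cmul a b = C0 -> a = C0 \/ b = C0.
Proof.
  intro H. assert (E : Cnorm2 a * Cnorm2 b = 0) by (rewrite <- Cnorm2_mul, H; apply Cnorm2_C0).
  apply Rmult_integral in E; destruct E; [left|right]; apply Cnorm2_eq0; auto.
Qed.

Definition C_eq_dec (a b : C) : {a = b} + {a <> b}.
Proof.
  destruct (Req_EM_T (Cre a) (Cre b)), (Req_EM_T (Cim a) (Cim b));
    try (right; intro h; subst; auto; fail).
  left; apply C_ext; auto.
Defined.

Lemma sumC_ext n f g : (forall k, (k < n)%nat -> f k = g k) -> sumC n f = sumC n g.
Proof. induction n; simpl; intros Hfg; auto. rewrite IHn, Hfg; auto. Qed.
Lemma sumR_ext n f g : (forall k, (k < n)%nat -> f k = g k) -> sumR n f = sumR n g.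
Proof. induction n; simpl; intros Hfg; auto. rewrite IHn, Hfg; auto. Qed.
Lemma sumC_add n f g : sumC n (fun k => Cadd (f k) (g k)) = Cadd (sumC n f) (sumC n g).
Proof. induction n; simpl. C_ext_ring. rewrite IHn; ring. Qed.
Lemma sumR_add n f g : sumR n (fun k => f k + g k) = sumR n f + sumR n g.
Proof. induction n; simpl. ring. rewrite IHn; ring. Qed.
Lemma sumC_opp n f : sumC n (fun k => Copp (f k)) = Copp (sumC n f).
Proof. induction n; simpl. C_ext_ring. rewrite IHn; ring. Qed.
Lemma sumR_opp n f : sumR n (fun k => - f k) = - sumR n f.
Proof. induction n; simpl. ring. rewrite IHn; ring. Qed.
Lemma sumC_mul_l n c f : Cmul c (sumC n f) = sumC n (fun k => Cmul c (f k)).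
Proof. induction n; simpl. C_ext_ring. rewrite <- IHn; ring. Qed.
Lemma sumC_mul_r n c f : Cmul (sumC n f) c = sumC n (fun k => Cmul (f k) c).
Proof. induction n; simpl. C_ext_ring. rewrite <- IHn; ring. Qed.
Lemma sumR_mul_l n c f : c * sumR n f = sumR n (fun k => c * f k).
Proof. induction n; simpl. ring. rewrite <- IHn; ring. Qed.
Lemma sumR_mul_r n c f : sumR n f * c = sumR n (fun k => f k * c).
Proof. induction n; simpl. ring. rewrite <- IHn; ring. Qed.
Lemma sumC_mul_sums n m f g :
  Cmul (sumC n f) (sumC m g) = sumC n (fun j => sumC m (fun k => Cmul (f j) (g k))).
Proof. rewrite sumC_mul_r. apply sumC_ext; intros. apply sumC_mul_l. Qed.
Lemma sumC_swap n m f :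
  sumC n (fun i => sumC m (fun j => f i j)) = sumC m (fun j => sumC n (fun i => f i j)).
Proof.
  induction n; simpl.
  - induction m; simpl; auto. rewrite <- IHm; C_ext_ring.
  - rewrite IHn, <- sumC_add; reflexivity.
Qed.
Lemma sumR_swap n m f :
  sumR n (fun i => sumR m (fun j => f i j)) = sumR m (fun j => sumR n (fun i => f i j)).
Proof.
  induction n; simpl.
  - induction m; simpl; auto. rewrite <- IHm; ring.
  - rewrite IHn, <- sumR_add; reflexivity.
Qed.
Lemma sumC_zero n f : (forall k, (k < n)%nat -> f k = C0) -> sumC n f = C0.
Proof. induction n; simpl; intros Hf; auto. rewrite IHn, Hf; auto. C_ext_ring. Qed.
Lemma sumR_zero n f : (forall k, (k < n)%nat -> f k = 0) -> sumR n f = 0.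
Proof. induction n; simpl; intros Hf; auto. rewrite IHn, Hf; auto. ring. Qed.
Lemma sumC_delta n f j :
  (j < n)%nat -> (forall k, (k < n)%nat -> k <> j -> f k = C0) -> sumC n f = f j.
Proof.
  induction n; simpl; intros Hj Hf. lia.
  destruct (Nat.eq_dec j n).
  - subst. rewrite sumC_zero. C_ext_ring. intros; apply Hf; lia.
  - rewrite IHn by (auto; lia). rewrite (Hf n) by lia. C_ext_ring.
Qed.
Lemma sumR_delta n f j :
  (j < n)%nat -> (forall k, (k < n)%nat -> k <> j -> f k = 0) -> sumR n f = f j.
Proof.
  induction n; simpl; intros Hj Hf. lia.
  destruct (Nat.eq_dec j n).
  - subst. rewrite sumR_zero. ring. intros; apply Hf; lia.
  - rewrite IHn by (auto; lia). rewrite (Hf n) by lia. ring.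
Qed.
Lemma Cre_sum n f : Cre (sumC n f) = sumR n (fun k => Cre (f k)).
Proof. induction n; simpl; auto. rewrite IHn; auto. Qed.
Lemma Cconj_sum n f : Cconj (sumC n f) = sumC n (fun k => Cconj (f k)).
Proof. induction n; simpl. C_ext_ring. rewrite Cconj_add, IHn; auto. Qed.
Lemma sumR_le n f g : (forall k, (k < n)%nat -> f k <= g k) -> sumR n f <= sumR n g.
Proof.
  induction n; simpl; intros Hfg. lra.
  assert (f n <= g n) by (apply Hfg; lia).
  assert (sumR n f <= sumR n g) by (apply IHn; intros; apply Hfg; lia). lra.
Qed.
Lemma sumR_nonneg n f : (forall k, (k < n)%nat -> 0 <= f k) -> 0 <= sumR n f.
Proof.
  intros. replace 0 with (sumR n (fun _ => 0)) by (apply sumR_zero; auto).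
  apply sumR_le; auto.
Qed.
Lemma sumR_term_le n f j :
  (forall k, (k < n)%nat -> 0 <= f k) -> (j < n)%nat -> f j <= sumR n f.
Proof.
  induction n; simpl; intros Hf Hj. lia.
  assert (0 <= sumR n f) by (apply sumR_nonneg; intros; apply Hf; lia).
  assert (0 <= f n) by (apply Hf; lia).
  destruct (Nat.eq_dec j n). subst; lra.
  assert (f j <= sumR n f) by (apply IHn; auto; lia). lra.
Qed.
Lemma sumR_le_of_single_support n (g : nat -> R) c :
  (forall i, (i < n)%nat -> 0 <= g i <= c) ->
  (forall i i', (i < n)%nat -> (i' < n)%nat -> i <> i' -> g i = 0 \/ g i' = 0) ->
  0 <= c -> sumR n g <= c.
Proof.
  induction n; simpl; intros H1 H2 Hc. lra.
  destruct (Req_dec (g n) 0) as [E|E].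
  - rewrite E. assert (sumR n g <= c); [|lra].
    apply IHn; auto.
  - rewrite sumR_zero. destruct (H1 n ltac:(lia)); lra.
    intros k Hk. destruct (H2 k n ltac:(lia) ltac:(lia) ltac:(lia)); [auto|contradiction].
Qed.

Definition sqnorm (d : nat) (v : Vec) : R := sumR d (fun k => Cnorm2 (v k)).
Definition mat_apply (d : nat) (A : Mat) (v : Vec) : Vec :=
  fun i => sumC d (fun j => Cmul (A i j) (v j)).

Lemma sqnorm_nonneg d v : 0 <= sqnorm d v.
Proof. apply sumR_nonneg; intros; apply Cnorm2_nonneg. Qed.
Lemma Cnorm2_le_sqnorm d v i : (i < d)%nat -> Cnorm2 (v i) <= sqnorm d v.
Proof.
  intro; apply (sumR_term_le d (fun k => Cnorm2 (v k))); auto. intros; apply Cnorm2_nonneg.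
Qed.
Lemma sqnorm_eq0 d v : sqnorm d v = 0 -> forall i, (i < d)%nat -> v i = C0.
Proof.
  intros H i Hi. apply Cnorm2_eq0.
  pose proof (Cnorm2_le_sqnorm d v i Hi). pose proof (Cnorm2_nonneg (v i)). lra.
Qed.
Lemma sqnorm_scale d c v : sqnorm d (fun i => Cmul (RtoC c) (v i)) = c * c * sqnorm d v.
Proof.
  unfold sqnorm. rewrite sumR_mul_l. apply sumR_ext; intros; apply Cnorm2_RtoC_mul.
Qed.

Lemma mat_apply_eq0 d (A : Mat) (v : Vec) i :
  (forall j, (j < d)%nat -> A i j = C0 \/ v j = C0) -> mat_apply d A v i = C0.
Proof.
  intros H. apply sumC_zero. intros k Hk.
  destruct (H k Hk) as [E|E]; rewrite E; ring.
Qed.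
Lemma mat_apply_ext d (A : Mat) (v w : Vec) i :
  (forall j, (j < d)%nat -> Cmul (A i j) (v j) = Cmul (A i j) (w j)) ->
  mat_apply d A v i = mat_apply d A w i.
Proof. intros H; apply sumC_ext; auto. Qed.
Lemma mat_apply_neq0 d (A : Mat) (v : Vec) i : Cnorm2 (mat_apply d A v i) <> 0 ->
  exists j, (j < d)%nat /\ A i j <> C0 /\ v j <> C0.
Proof.
  intro H. apply NNPP; intro H'. apply H. rewrite mat_apply_eq0. apply Cnorm2_C0.
  intros j Hj. destruct (C_eq_dec (A i j) C0); auto. destruct (C_eq_dec (v j) C0); auto.
  exfalso; apply H'; exists j; auto.
Qed.

Lemma Cnorm2_sum_expand n (z : Vec) (A : nat -> C) :
  Cnorm2 (sumC n (fun j => Cmul (A j) (z j))) =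
  Cre (sumC n (fun j => sumC n (fun k =>
         Cmul (Cmul (Cconj (z j)) (z k)) (Cmul (Cconj (A j)) (A k))))).
Proof.
  rewrite <- Cre_conj_mul, Cconj_sum, sumC_mul_sums. f_equal.
  apply sumC_ext; intros; apply sumC_ext; intros. rewrite Cconj_mul; ring.
Qed.

Lemma kraus_sqnorm_sum d N K (b : Vec) : kraus_complete d N K ->
  sumR N (fun n => sqnorm d (mat_apply d (K n) b)) = sqnorm d b.
Proof.
  intro HK. unfold sqnorm, mat_apply.
  transitivity (Cre (sumC N (fun n => sumC d (fun i => sumC d (fun j => sumC d (fun k =>
     Cmul (Cmul (Cconj (b j)) (b k)) (Cmul (Cconj (K n i j)) (K n i k)))))))).
  { rewrite Cre_sum. apply sumR_ext; intros. rewrite Cre_sum. apply sumR_ext; intros.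
    apply Cnorm2_sum_expand. }
  transitivity (Cre (sumC d (fun j => sumC d (fun k => Cmul (Cmul (Cconj (b j)) (b k))
       (sumC N (fun n => mat_mul d (adjoint (K n)) (K n) j k)))))).
  { f_equal.
    transitivity (sumC N (fun n => sumC d (fun j => sumC d (fun k => sumC d (fun i =>
     Cmul (Cmul (Cconj (b j)) (b k)) (Cmul (Cconj (K n i j)) (K n i k))))))).
    { apply sumC_ext; intros.
      rewrite sumC_swap. apply sumC_ext; intros. rewrite sumC_swap. reflexivity. }
    rewrite sumC_swap. apply sumC_ext; intros. rewrite sumC_swap. apply sumC_ext; intros.
    rewrite sumC_mul_l. apply sumC_ext; intros. unfold mat_mul, adjoint.
    rewrite sumC_mul_l. reflexivity. }
  rewrite Cre_sum. apply sumR_ext; intros j Hj.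
  rewrite (sumC_delta d _ j Hj).
  - rewrite (HK j j Hj Hj). unfold id_mat. rewrite Nat.eqb_refl. unfold Cnorm2; simpl; ring.
  - intros k Hk Hkj. rewrite (HK j k Hj Hk). unfold id_mat.
    destruct (Nat.eqb_spec j k); [lia|]. C_ext_ring.
Qed.

Definition basis_proj (j : nat) : Mat :=
  fun i i' => if Nat.eqb i i' then (if Nat.eqb i j then C1 else C0) else C0.

Lemma basis_proj_incoherent d j : (j < d)%nat -> incoherent d (basis_proj j).
Proof.
  intro Hj. exists (fun i => if Nat.eqb i j then 1 else 0). split; [|split].
  - intros i _; destruct (Nat.eqb i j); lra.
  - rewrite (sumR_delta d _ j Hj), Nat.eqb_refl; auto.
    intros k _ hk. destruct (Nat.eqb_spec k j); [lia|auto].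
  - intros i i' _ _. unfold basis_proj. destruct (Nat.eqb i i'); auto.
    destruct (Nat.eqb i j); C_ext_ring.
Qed.

Lemma mat_mul_basis_proj d (A : Mat) j a k : (k < d)%nat ->
  mat_mul d A (basis_proj j) a k = if Nat.eqb k j then A a j else C0.
Proof.
  intro Hk. unfold mat_mul. rewrite (sumC_delta d _ k Hk).
  - unfold basis_proj. rewrite Nat.eqb_refl. destruct (Nat.eqb_spec k j); subst; ring.
  - intros l _ hl. unfold basis_proj. destruct (Nat.eqb_spec l k); [lia|ring].
Qed.

(* [K_n |j><j| K_n^dagger] has entries [K_n a j * conj (K_n b j)]: it is diagonal
   exactly when each column of [K_n] has at most one nonzero entry. *)
Lemma incoherent_kraus_column d N K n j a b : incoherent_kraus d N K ->
  (n < N)%nat -> (j < d)%nat -> (a < d)%nat -> (b < d)%nat -> a <> b ->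
  K n a j = C0 \/ K n b j = C0.
Proof.
  intros [_ HI] Hn Hj Ha Hb Hab.
  pose proof (HI (basis_proj j) (basis_proj_incoherent d j Hj) n Hn a b Ha Hb Hab) as E.
  assert (Eab : mat_mul d (mat_mul d (K n) (basis_proj j)) (adjoint (K n)) a b
                = Cmul (K n a j) (Cconj (K n b j))).
  { unfold mat_mul at 1. rewrite (sumC_delta d _ j Hj).
    - rewrite mat_mul_basis_proj, Nat.eqb_refl by auto. reflexivity.
    - intros k Hk hk. rewrite mat_mul_basis_proj by auto. destruct (Nat.eqb_spec k j); [lia|ring]. }
  rewrite Eab in E. apply Cmul_integral in E as [E|E]; [left|right]; auto.
  apply Cconj_eq0; auto.
Qed.

Fixpoint npos (d : nat) (f : nat -> R) : nat :=
  match d with O => O | S k => (npos k f + (if Rlt_dec 0 (f k) then 1 else 0))%nat end.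

Lemma npos_eq0 d f : npos d f = O -> forall j, (j < d)%nat -> f j <= 0.
Proof.
  induction d; simpl; intros H j Hj. lia.
  destruct (Rlt_dec 0 (f d)); [lia|].
  destruct (Nat.eq_dec j d). subst; lra. apply IHd; lia.
Qed.

Lemma npos_min d f : (0 < npos d f)%nat ->
  exists j0, (j0 < d)%nat /\ 0 < f j0 /\ forall j, (j < d)%nat -> 0 < f j -> f j0 <= f j.
Proof.
  induction d; simpl; intros H. lia.
  destruct (Nat.eq_dec (npos d f) 0) as [E|E].
  - destruct (Rlt_dec 0 (f d)); [|lia]. exists d. split; [lia|split; auto].
    intros j Hj Hp. destruct (Nat.eq_dec j d). subst; lra.
    pose proof (npos_eq0 d f E j ltac:(lia)). lra.
  - destruct IHd as [j1 [H1 [H2 H3]]]. lia.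
    destruct (Rlt_dec 0 (f d)) as [p|p]; [destruct (Rle_dec (f j1) (f d))|].
    + exists j1. split; [lia|split; auto]. intros j Hj Hp.
      destruct (Nat.eq_dec j d). subst; auto. apply H3; auto; lia.
    + exists d. split; [lia|split; auto]. intros j Hj Hp.
      destruct (Nat.eq_dec j d). subst; lra. pose proof (H3 j ltac:(lia) Hp). lra.
    + exists j1. split; [lia|split; auto]. intros j Hj Hp.
      destruct (Nat.eq_dec j d). subst; lra. apply H3; auto; lia.
Qed.

Lemma npos_le d f g :
  (forall j, (j < d)%nat -> 0 < g j -> 0 < f j) -> (npos d g <= npos d f)%nat.
Proof.
  induction d; simpl; intros H. lia.
  assert (npos d g <= npos d f)%nat by (apply IHd; intros; apply H; auto; lia).
  destruct (Rlt_dec 0 (g d)), (Rlt_dec 0 (f d)); try lia.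
  exfalso; apply n, H; auto.
Qed.

Lemma npos_lt d f g j0 : (forall j, (j < d)%nat -> 0 < g j -> 0 < f j) -> (j0 < d)%nat ->
  0 < f j0 -> ~ 0 < g j0 -> (npos d g < npos d f)%nat.
Proof.
  induction d; simpl; intros H Hj0 Hf Hg. lia.
  destruct (Nat.eq_dec j0 d).
  - subst. assert (npos d g <= npos d f)%nat by (apply npos_le; intros; apply H; auto; lia).
    destruct (Rlt_dec 0 (g d)), (Rlt_dec 0 (f d)); try lia; contradiction.
  - assert (npos d g < npos d f)%nat by (apply IHd; auto; try lia; intros; apply H; auto; lia).
    destruct (Rlt_dec 0 (g d)), (Rlt_dec 0 (f d)); try lia.
    exfalso; apply n0, H; auto.
Qed.

Definition restrict_pos (l : nat -> R) (v : Vec) : Vec :=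
  fun j => if Rlt_dec 0 (l j) then v j else C0.

Lemma weighted_le_restrict_pos d (A : Mat) (a : Vec) (l : nat -> R) (Li t : R) i :
  (forall j, (j < d)%nat -> 0 <= l j) -> 0 <= t ->
  (forall j, (j < d)%nat -> A i j <> C0 -> a j <> C0 -> Li <= l j) ->
  Cnorm2 (mat_apply d A a i) * Li <=
  t * Cnorm2 (mat_apply d A (restrict_pos l a) i) + Cnorm2 (mat_apply d A a i) * Rmax (Li - t) 0.
Proof.
  intros Hl Ht HL.
  pose proof (Cnorm2_nonneg (mat_apply d A a i)).
  pose proof (Cnorm2_nonneg (mat_apply d A (restrict_pos l a) i)).
  pose proof (Rmax_l (Li - t) 0). pose proof (Rmax_r (Li - t) 0).
  destruct (classic (exists j, (j < d)%nat /\ A i j <> C0 /\ a j <> C0 /\ ~ 0 < l j))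
    as [[j [Hj [HAj [Haj Hlj]]]] | Hpos].
  - pose proof (HL j Hj HAj Haj). pose proof (Hl j Hj).
    assert (Li <= 0) by lra. nra.
  - assert (E : mat_apply d A (restrict_pos l a) i = mat_apply d A a i).
    { apply mat_apply_ext. intros j Hj. unfold restrict_pos.
      destruct (Rlt_dec 0 (l j)) as [|Hlj]; auto.
      destruct (C_eq_dec (A i j) C0) as [e|e]; [rewrite e; ring|].
      destruct (C_eq_dec (a j) C0) as [e'|e']; [rewrite e'; ring|].
      exfalso; apply Hpos; exists j; auto. }
    rewrite E. nra.
Qed.

Definition kraus_dominated (d N : nat) (K : nat -> Mat) (a : Vec)
    (l : nat -> R) (L : nat -> nat -> R) : Prop :=
  forall n i j, (n < N)%nat -> (i < d)%nat -> (j < d)%nat ->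
    K n i j <> C0 -> a j <> C0 -> L n i <= l j.

Section LayerCake.

Variables (d N : nat) (K : nat -> Mat).
Hypothesis HK : kraus_complete d N K.

Let weighted (a : Vec) (L : nat -> nat -> R) : R :=
  sumR N (fun n => sumR d (fun i => Cnorm2 (mat_apply d (K n) a i) * L n i)).

Lemma kraus_weighted_le_zero a l L :
  npos d l = O -> (forall j, (j < d)%nat -> 0 <= l j) -> kraus_dominated d N K a l L ->
  weighted a L <= sumR d (fun j => Cnorm2 (a j) * l j).
Proof.
  intros Hc Hl HL. apply Rle_trans with 0.
  - rewrite <- (sumR_zero N (fun _ => 0)) by auto.
    apply sumR_le; intros n Hn. rewrite <- (sumR_zero d (fun _ => 0)) by auto.
    apply sumR_le; intros i Hi.
    pose proof (Cnorm2_nonneg (mat_apply d (K n) a i)).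
    destruct (Req_dec (Cnorm2 (mat_apply d (K n) a i)) 0) as [E|E]; [rewrite E; lra|].
    destruct (mat_apply_neq0 d (K n) a i E) as [j [Hj [H1 H2]]].
    pose proof (HL n i j Hn Hi Hj H1 H2). pose proof (npos_eq0 d l Hc j Hj). nra.
  - apply sumR_nonneg; intros j Hj. pose proof (Hl j Hj). pose proof (Cnorm2_nonneg (a j)). nra.
Qed.

(* A discrete layer-cake argument: lower all positive weights [l] by their least value
   [t]; the layer of height [t] contributes [t * |restrict_pos l a|^2] on both sides by
   the completeness relation, and the lowered weights have fewer positive values. *)
Lemma kraus_weighted_le_count c : forall a l L,
  (npos d l <= c)%nat -> (forall j, (j < d)%nat -> 0 <= l j) -> kraus_dominated d N K a l L ->
  weighted a L <= sumR d (fun j => Cnorm2 (a j) * l j).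
Proof.
  induction c as [|c IH]; intros a l L Hc Hl HL.
  { apply kraus_weighted_le_zero; auto; lia. }
  destruct (Nat.eq_dec (npos d l) 0) as [E0|E0].
  { apply kraus_weighted_le_zero; auto. }
  destruct (npos_min d l ltac:(lia)) as [j0 [Hj0 [Ht Hmin]]].
  set (t := l j0) in *.
  set (l' := fun j => if Rlt_dec 0 (l j) then l j - t else 0).
  set (L' := fun n i => Rmax (L n i - t) 0).
  assert (Hl' : forall j, (j < d)%nat -> 0 <= l' j).
  { intros j Hj. unfold l'. destruct (Rlt_dec 0 (l j)) as [r|]; [pose proof (Hmin j Hj r)|]; lra. }
  assert (Hc' : (npos d l' <= c)%nat).
  { enough (npos d l' < npos d l)%nat by lia.
    apply npos_lt with j0; auto.
    - intros j Hj. unfold l'. destruct (Rlt_dec 0 (l j)); auto. lra.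
    - unfold l', t. destruct (Rlt_dec 0 (l j0)); intro; lra. }
  assert (HL' : kraus_dominated d N K a l' L').
  { intros n i j Hn Hi Hj H1 H2. pose proof (HL n i j Hn Hi Hj H1 H2). pose proof (Hl j Hj).
    unfold L', l'. destruct (Rlt_dec 0 (l j)) as [r|]; [pose proof (Hmin j Hj r)|];
      apply Rmax_lub; lra. }
  apply Rle_trans with (t * sqnorm d (restrict_pos l a) + weighted a L').
  - unfold weighted. rewrite <- (kraus_sqnorm_sum d N K _ HK), sumR_mul_l, <- sumR_add.
    apply sumR_le; intros n Hn. unfold sqnorm. rewrite sumR_mul_l, <- sumR_add.
    apply sumR_le; intros i Hi.
    apply weighted_le_restrict_pos; [auto | lra | intros; apply HL; auto].
  - eapply Rle_trans; [apply Rplus_le_compat_l, (IH a l' L'); auto|].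
    unfold sqnorm. rewrite sumR_mul_l, <- sumR_add. apply Req_le, sumR_ext; intros j Hj.
    unfold restrict_pos, l'. pose proof (Hl j Hj). destruct (Rlt_dec 0 (l j)).
    + ring.
    + rewrite Cnorm2_C0. replace (l j) with 0 by lra. ring.
Qed.

Lemma kraus_weighted_le a l L :
  (forall j, (j < d)%nat -> 0 <= l j) -> kraus_dominated d N K a l L ->
  weighted a L <= sumR d (fun j => Cnorm2 (a j) * l j).
Proof. apply (kraus_weighted_le_count (npos d l)); auto. Qed.

End LayerCake.

Lemma ln_le_sub1 y : 0 < y -> ln y <= y - 1.
Proof. intro Hy. pose proof (exp_ineq1_le (ln y)) as E. rewrite exp_ln in E; auto. lra. Qed.
Lemma ln_le x y : 0 < x -> x <= y -> ln x <= ln y.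
Proof. intros Hx [H|H]; [left; apply ln_increasing; auto | subst; lra]. Qed.
Lemma ln_div x y : 0 < x -> 0 < y -> ln (x / y) = ln x - ln y.
Proof.
  intros. unfold Rdiv. rewrite ln_mult, ln_Rinv; auto; try ring.
  apply Rinv_0_lt_compat; auto.
Qed.
Lemma ln_le_0 x : 0 < x -> x <= 1 -> ln x <= 0.
Proof. intros. rewrite <- ln_1. apply ln_le; auto. Qed.
Lemma ln2_pos : 0 < ln 2.
Proof. pose proof ln_lt_2; lra. Qed.

(* [ln y <= y - 1] at [y = q m / x]. *)
Lemma xln_gibbs x q m : 0 < x -> 0 < q -> 0 < m ->
  - (x * ln (x / q)) <= x * - ln m + q * m - x.
Proof.
  intros Hx Hq Hm.
  pose proof (ln_le_sub1 (q * m / x) ltac:(apply Rdiv_lt_0_compat; nra)) as H.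
  rewrite ln_div, ln_mult in H by nra. rewrite ln_div by lra.
  assert (x * (q * m / x - 1) = q * m - x) by (field; lra).
  nra.
Qed.

Definition xlnx_rel (x s : R) : R := if Rlt_dec 0 x then x * ln (x / s) else 0.
Definition neglog (x : R) : R := if Rlt_dec 0 x then - ln x else 0.

(* [ent d v] is [sqnorm d v] times the entropy, in nats, of the distribution
   [Cnorm2 (v i) / sqnorm d v]; unlike [RI_pure] it needs no normalization. *)
Definition ent (d : nat) (v : Vec) : R :=
  - sumR d (fun i => xlnx_rel (Cnorm2 (v i)) (sqnorm d v)).

Lemma ent_nonneg d v : 0 <= ent d v.
Proof.
  unfold ent. rewrite <- sumR_opp. apply sumR_nonneg. intros i Hi. unfold xlnx_rel.
  destruct (Rlt_dec 0 (Cnorm2 (v i))); [|lra].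
  pose proof (Cnorm2_le_sqnorm d v i Hi) as Hle.
  assert (ln (Cnorm2 (v i) / sqnorm d v) <= 0).
  { rewrite ln_div by lra. pose proof (ln_le _ _ r Hle). lra. }
  nra.
Qed.

Lemma ent_scale d v c : c <> 0 -> ent d (fun i => Cmul (RtoC c) (v i)) = c * c * ent d v.
Proof.
  intro Hc. assert (Hc2 : 0 < c * c) by nra.
  unfold ent. rewrite sqnorm_scale, <- !sumR_opp, sumR_mul_l. apply sumR_ext; intros i Hi.
  rewrite Cnorm2_RtoC_mul. unfold xlnx_rel. pose proof (Cnorm2_nonneg (v i)).
  destruct (Rlt_dec 0 (Cnorm2 (v i))) as [q|q];
    destruct (Rlt_dec 0 (c * c * Cnorm2 (v i))) as [q'|q']; try nra.
  replace (c * c * Cnorm2 (v i) / (c * c * sqnorm d v)) with (Cnorm2 (v i) / sqnorm d v)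
    by (field; pose proof (Cnorm2_le_sqnorm d v i Hi); lra).
  ring.
Qed.

Lemma ent_normalized d psi : normalized d psi -> ent d psi = ln 2 * RI_pure d psi.
Proof.
  intro Hn. pose proof ln2_pos. unfold ent, RI_pure. rewrite (Hn : sqnorm d psi = 1).
  rewrite <- !sumR_opp, sumR_mul_l. apply sumR_ext; intros i Hi. unfold xlnx_rel, xlog2.
  destruct (Rlt_dec 0 (Cnorm2 (psi i))); destruct (Rle_dec (Cnorm2 (psi i)) 0); try lra.
  unfold Rdiv. rewrite Rinv_1, Rmult_1_r. field. lra.
Qed.

Lemma ent_unit d a : sqnorm d a = 1 ->
  ent d a = sumR d (fun j => Cnorm2 (a j) * neglog (Cnorm2 (a j))).
Proof.
  intro Ha. unfold ent. rewrite Ha, <- sumR_opp. apply sumR_ext; intros j Hj.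
  unfold xlnx_rel, neglog. destruct (Rlt_dec 0 (Cnorm2 (a j))); [|ring].
  unfold Rdiv; rewrite Rinv_1, Rmult_1_r; ring.
Qed.

Definition support_mass (d : nat) (A : Mat) (a : Vec) (i : nat) : R :=
  sumR d (fun j => if C_eq_dec (A i j) C0 then 0 else Cnorm2 (a j)).

Lemma support_mass_nonneg d A a i : 0 <= support_mass d A a i.
Proof.
  apply sumR_nonneg; intros j Hj. destruct (C_eq_dec _ _); [lra | apply Cnorm2_nonneg].
Qed.

Lemma Cnorm2_le_support_mass d A a i j :
  (j < d)%nat -> A i j <> C0 -> Cnorm2 (a j) <= support_mass d A a i.
Proof.
  intros Hj HAij.
  pose proof (sumR_term_le d (fun j => if C_eq_dec (A i j) C0 then 0 else Cnorm2 (a j)) j) as T.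
  simpl in T. destruct (C_eq_dec (A i j) C0); [contradiction|]. apply T; auto.
  intros k Hk. destruct (C_eq_dec _ _); [lra | apply Cnorm2_nonneg].
Qed.

Lemma support_mass_sum_le d A a :
  (forall j i i', (j < d)%nat -> (i < d)%nat -> (i' < d)%nat -> i <> i' ->
     A i j = C0 \/ A i' j = C0) ->
  sumR d (support_mass d A a) <= sqnorm d a.
Proof.
  intro Hcol. unfold support_mass. rewrite sumR_swap.
  apply sumR_le; intros j Hj. pose proof (Cnorm2_nonneg (a j)).
  apply sumR_le_of_single_support; auto.
  - intros i Hi. destruct (C_eq_dec _ _); lra.
  - intros i i' Hi Hi' Hne. destruct (Hcol j i i' Hj Hi Hi' Hne) as [E|E];
      [left; destruct (C_eq_dec (A i j) C0) | right; destruct (C_eq_dec (A i' j) C0)];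
      auto; contradiction.
Qed.

Lemma neg_xlnx_rel_le d A a i : (i < d)%nat ->
  - xlnx_rel (Cnorm2 (mat_apply d A a i)) (sqnorm d (mat_apply d A a)) <=
  Cnorm2 (mat_apply d A a i) * neglog (support_mass d A a i)
  + sqnorm d (mat_apply d A a) * support_mass d A a i - Cnorm2 (mat_apply d A a i).
Proof.
  intro Hi. pose proof (Cnorm2_nonneg (mat_apply d A a i)).
  pose proof (Cnorm2_le_sqnorm d (mat_apply d A a) i Hi).
  pose proof (support_mass_nonneg d A a i). pose proof (sqnorm_nonneg d (mat_apply d A a)).
  unfold xlnx_rel. destruct (Rlt_dec 0 (Cnorm2 (mat_apply d A a i))) as [Hx|Hx].
  - destruct (mat_apply_neq0 d A a i ltac:(lra)) as [j [Hj [HAj Haj]]].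
    pose proof (Cnorm2_pos _ Haj). pose proof (Cnorm2_le_support_mass d A a i j Hj HAj).
    unfold neglog. destruct (Rlt_dec 0 (support_mass d A a i)); [|lra].
    apply xln_gibbs; lra.
  - replace (Cnorm2 (mat_apply d A a i)) with 0 by lra. nra.
Qed.

Lemma ent_kraus_le d N K (a : Vec) : incoherent_kraus d N K -> sqnorm d a = 1 ->
  sumR N (fun n => ent d (mat_apply d (K n) a)) <= ent d a.
Proof.
  intros HIK Ha.
  assert (Hq : forall j, (j < d)%nat -> 0 <= Cnorm2 (a j) <= 1).
  { intros j Hj; split; [apply Cnorm2_nonneg | rewrite <- Ha; apply Cnorm2_le_sqnorm; auto]. }
  apply Rle_trans with (sumR N (fun n => sumR d (fun i =>
    Cnorm2 (mat_apply d (K n) a i) * neglog (support_mass d (K n) a i)))).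
  - apply sumR_le; intros n Hn. unfold ent at 1. rewrite <- sumR_opp.
    set (q := sqnorm d (mat_apply d (K n) a)).
    assert (Hmass : q * sumR d (support_mass d (K n) a) <= q).
    { pose proof (sqnorm_nonneg d (mat_apply d (K n) a)) as Hq0. fold q in Hq0.
      pose proof (support_mass_sum_le d (K n) a
        (fun j i i' => incoherent_kraus_column d N K n j i i' HIK Hn)) as Hle.
      rewrite Ha in Hle. nra. }
    apply Rle_trans with (sumR d (fun i =>
      Cnorm2 (mat_apply d (K n) a i) * neglog (support_mass d (K n) a i)
      + q * support_mass d (K n) a i - Cnorm2 (mat_apply d (K n) a i))).
    + apply sumR_le; intros i Hi. apply neg_xlnx_rel_le; auto.
    + unfold Rminus. rewrite !sumR_add, <- sumR_mul_l, sumR_opp.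
      fold (sqnorm d (mat_apply d (K n) a)) q. lra.
  - rewrite ent_unit by auto. apply (kraus_weighted_le d N K (proj1 HIK)).
    + intros j Hj. unfold neglog. destruct (Rlt_dec 0 (Cnorm2 (a j))); [|lra].
      pose proof (ln_le_0 _ r (proj2 (Hq j Hj))). lra.
    + intros n i j Hn Hi Hj HKj Haj. pose proof (Cnorm2_pos _ Haj).
      pose proof (Cnorm2_le_support_mass d (K n) a i j Hj HKj) as Hle. unfold neglog.
      destruct (Rlt_dec 0 (support_mass d (K n) a i)); [|lra].
      destruct (Rlt_dec 0 (Cnorm2 (a j))); [|lra].
      pose proof (ln_le _ _ r0 Hle). lra.
Qed.

Definition basis_vec (k : nat) (s : C) : Vec := fun i => if Nat.eqb i k then s else C0.

Lemma sumC_basis_vec_r d k s f : (k < d)%nat ->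
  sumC d (fun j => Cmul (f j) (basis_vec k s j)) = Cmul (f k) s.
Proof.
  intro Hk. rewrite (sumC_delta d _ k Hk); unfold basis_vec; [rewrite Nat.eqb_refl; auto|].
  intros j _ Hj. destruct (Nat.eqb_spec j k); [lia|ring].
Qed.
Lemma sumC_basis_vec_l d k s f : (k < d)%nat ->
  sumC d (fun i => Cmul (Cconj (basis_vec k s i)) (f i)) = Cmul (Cconj s) (f k).
Proof.
  intro Hk. rewrite (sumC_delta d _ k Hk); unfold basis_vec; [rewrite Nat.eqb_refl; auto|].
  intros j _ Hj. destruct (Nat.eqb_spec j k); [lia|]. rewrite Cconj_C0; ring.
Qed.

Lemma quad_add_basis_vec d A v k s : (k < d)%nat ->
  quad d A (fun i => Cadd (v i) (basis_vec k s i)) =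
  Cadd (Cadd (Cadd (quad d A v) (Cmul (Cconj s) (mat_apply d A v k)))
     (Cmul s (sumC d (fun i => Cmul (Cconj (v i)) (A i k))))) (Cmul (Cmul (Cconj s) s) (A k k)).
Proof.
  intro Hk. unfold quad.
  transitivity (sumC d (fun i => Cadd (Cadd (Cadd
     (sumC d (fun j => Cmul (Cconj (v i)) (Cmul (A i j) (v j))))
     (Cmul (Cconj (basis_vec k s i)) (mat_apply d A v i)))
     (Cmul (Cmul (Cconj (v i)) (A i k)) s))
     (Cmul (Cconj (basis_vec k s i)) (Cmul (A i k) s)))).
  { apply sumC_ext; intros i Hi.
    transitivity (Cadd (Cadd (Cadd
       (sumC d (fun j => Cmul (Cconj (v i)) (Cmul (A i j) (v j))))
       (sumC d (fun j => Cmul (Cconj (basis_vec k s i)) (Cmul (A i j) (v j)))))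
       (sumC d (fun j => Cmul (Cmul (Cconj (v i)) (A i j)) (basis_vec k s j))))
       (sumC d (fun j => Cmul (Cmul (Cconj (basis_vec k s i)) (A i j)) (basis_vec k s j)))).
    { rewrite <- !sumC_add. apply sumC_ext; intros j Hj. rewrite Cconj_add. ring. }
    rewrite !sumC_basis_vec_r by auto. unfold mat_apply. rewrite sumC_mul_l. ring. }
  rewrite !sumC_add, !sumC_basis_vec_l by auto. rewrite <- sumC_mul_r. ring.
Qed.

Lemma hermitian_diag_real d A k : hermitian d A -> (k < d)%nat -> Cim (A k k) = 0.
Proof.
  intros H Hk. pose proof (f_equal Cim (H k k Hk Hk)) as E.
  unfold adjoint in E; simpl in E. lra.
Qed.

Lemma hermitian_row_conj d A v k : hermitian d A -> (k < d)%nat ->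
  sumC d (fun i => Cmul (Cconj (v i)) (A i k)) = Cconj (mat_apply d A v k).
Proof.
  intros H Hk. unfold mat_apply. rewrite Cconj_sum. apply sumC_ext; intros i Hi.
  rewrite (H i k Hi Hk). unfold adjoint. rewrite Cconj_mul. ring.
Qed.

Lemma quad_basis_vec d A j : (j < d)%nat -> quad d A (basis_vec j C1) = A j j.
Proof.
  intro Hj. unfold quad.
  rewrite (sumC_ext d _ (fun i => Cmul (Cconj (basis_vec j C1 i)) (Cmul (A i j) C1))).
  - rewrite sumC_basis_vec_l by auto. C_ext_ring.
  - intros i Hi.
    rewrite <- (sumC_basis_vec_r d j C1 (A i)), sumC_mul_l by auto.
    apply sumC_ext; intros; ring.
Qed.

Lemma psd_diag_nonneg d A j : psd d A -> (j < d)%nat -> 0 <= Cre (A j j).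
Proof. intros [_ H] Hj. rewrite <- (quad_basis_vec d A j Hj). apply H. Qed.

(* Cauchy-Schwarz for the semi-inner product [A]: test positivity on [v - t (A v)_k e_k]. *)
Lemma psd_row_bound d A v k : psd d A -> (k < d)%nat ->
  Cnorm2 (mat_apply d A v k) <= Cre (A k k) * Cre (quad d A v).
Proof.
  intros [Hh Hp] Hk. pose proof (psd_diag_nonneg d A k (conj Hh Hp) Hk) as Hr.
  set (b := mat_apply d A v k) in *.
  set (r := Cre (A k k)) in *. set (Q := Cre (quad d A v)).
  assert (HE : forall t,
    Cre (quad d A (fun i => Cadd (v i) (basis_vec k (Cmul (RtoC (- t)) b) i))) =
    Q - 2 * t * Cnorm2 b + t * t * Cnorm2 b * r).
  { intro t. rewrite (quad_add_basis_vec d A v k _ Hk), (hermitian_row_conj d A v k Hh Hk).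
    fold b. pose proof (hermitian_diag_real d A k Hh Hk) as Hi.
    unfold Q, r, Cnorm2. simpl. rewrite Hi. ring. }
  assert (HQ : 0 <= Q) by apply Hp.
  pose proof (Cnorm2_nonneg b) as Hb.
  destruct Hr as [Hr|Hr].
  - pose proof (Hp (fun i => Cadd (v i) (basis_vec k (Cmul (RtoC (- / r)) b) i))) as P.
    rewrite HE in P.
    replace (Q - 2 * / r * Cnorm2 b + / r * / r * Cnorm2 b * r) with (Q - Cnorm2 b / r)
      in P by (field; lra).
    apply Rmult_le_reg_r with (/ r); [apply Rinv_0_lt_compat; auto|].
    replace (r * Q * / r) with Q by (field; lra). unfold Rdiv in P; lra.
  - rewrite <- Hr, Rmult_0_l. destruct Hb as [Hb|Hb]; [exfalso|lra].
    pose proof (Hp (fun i => Cadd (v i) (basis_vec k (Cmul (RtoC (- ((Q + 1) / Cnorm2 b))) b) i)))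
      as P.
    rewrite HE, <- Hr in P.
    assert (Q - 2 * ((Q + 1) / Cnorm2 b) * Cnorm2 b = - Q - 2) by (field; lra). nra.
Qed.

Lemma psd_row_eq0 d A k j : psd d A -> (k < d)%nat -> (j < d)%nat -> Cre (A k k) = 0 ->
  A k j = C0.
Proof.
  intros Hp Hk Hj Hr. pose proof (psd_row_bound d A (basis_vec j C1) k Hp Hk) as P.
  unfold mat_apply in P. rewrite sumC_basis_vec_r, Hr, Rmult_0_l in P by auto.
  replace (Cmul (A k j) C1) with (A k j) in P by ring.
  apply Cnorm2_eq0. pose proof (Cnorm2_nonneg (A k j)). lra.
Qed.

Lemma quad_sub d (A B : Mat) v :
  quad d (fun i j => Csub (A i j) (B i j)) v = Csub (quad d A v) (quad d B v).
Proof.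
  unfold quad, Csub. rewrite <- sumC_opp, <- sumC_add. apply sumC_ext; intros.
  rewrite <- sumC_opp, <- sumC_add. apply sumC_ext; intros. ring.
Qed.

Lemma quad_outer d u v : quad d (outer u) v =
  Cmul (sumC d (fun i => Cmul (Cconj (v i)) (u i)))
       (Cconj (sumC d (fun i => Cmul (Cconj (v i)) (u i)))).
Proof.
  unfold quad, outer. rewrite Cconj_sum, sumC_mul_sums.
  apply sumC_ext; intros; apply sumC_ext; intros.
  rewrite Cconj_mul, Cconj_involutive. ring.
Qed.

Lemma Cre_outer_diag u i : Cre (outer u i i) = Cnorm2 (u i).
Proof. unfold outer, Cnorm2; simpl; ring. Qed.

(* One step of a Cholesky factorization; the second conjunct says that the [k]-th
   diagonal entry of the difference vanishes. *)
Lemma psd_sub_outer_column d A k : psd d A -> (k < d)%nat -> 0 < Cre (A k k) ->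
  let u := fun i => Cmul (RtoC (/ sqrt (Cre (A k k)))) (A i k) in
  psd d (fun i j => Csub (A i j) (outer u i j)) /\
  Cre (A k k) = Cnorm2 (u k).
Proof.
  intros HA Hk Hr u. destruct HA as [Hh Hp].
  assert (Hc : / sqrt (Cre (A k k)) * / sqrt (Cre (A k k)) = / Cre (A k k))
    by (rewrite <- Rinv_mult, sqrt_sqrt; lra).
  split; [split|].
  - intros i j Hi Hj. unfold adjoint, outer, Csub. rewrite (Hh i j Hi Hj).
    unfold adjoint. rewrite Cconj_add, Cconj_opp, Cconj_mul, Cconj_involutive. ring.
  - intro v. rewrite quad_sub, quad_outer.
    rewrite (sumC_ext d _ (fun i => Cmul (RtoC (/ sqrt (Cre (A k k))))
                                         (Cmul (Cconj (v i)) (A i k))))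
      by (intros; unfold u; ring).
    rewrite <- sumC_mul_l, (hermitian_row_conj d A v k Hh Hk).
    pose proof (psd_row_bound d A v k (conj Hh Hp) Hk) as P.
    set (b := mat_apply d A v k) in *. set (Q := Cre (quad d A v)) in *.
    set (c := / sqrt (Cre (A k k))) in *.
    replace (Cre (Csub (quad d A v) (Cmul (Cmul (RtoC c) (Cconj b))
        (Cconj (Cmul (RtoC c) (Cconj b))))))
      with (Q - c * c * Cnorm2 b) by (unfold Q, Cnorm2; simpl; ring).
    rewrite Hc. apply Rmult_le_reg_l with (Cre (A k k)); auto. rewrite Rmult_0_r.
    replace (Cre (A k k) * (Q - / Cre (A k k) * Cnorm2 b))
      with (Cre (A k k) * Q - Cnorm2 b) by (field; lra). lra.
  - unfold u. rewrite Cnorm2_RtoC_mul, Hc. unfold Cnorm2.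
    rewrite (hermitian_diag_real d A k Hh Hk). field. lra.
Qed.

Lemma psd_outer_decomposition_count d c : forall A, psd d A ->
  (npos d (fun i => Cre (A i i)) <= c)%nat ->
  exists m w, mat_eq d A (fun i j => sumC m (fun e => outer (w e) i j)).
Proof.
  induction c as [|c IH]; intros A HA Hc.
  all: destruct (Nat.eq_dec (npos d (fun i => Cre (A i i))) 0) as [E0|E0].
  1,3: exists O, (fun _ _ => C0); intros i j Hi Hj; simpl;
    apply (psd_row_eq0 d A i j HA Hi Hj);
    pose proof (npos_eq0 d _ E0 i Hi); pose proof (psd_diag_nonneg d A i HA Hi); simpl in *; lra.
  1: lia.
  destruct (npos_min d (fun i => Cre (A i i)) ltac:(lia)) as [k [Hk [Hr _]]].
  destruct (psd_sub_outer_column d A k HA Hk Hr) as [HA' Hkk].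
  set (u := fun i => Cmul (RtoC (/ sqrt (Cre (A k k)))) (A i k)) in *.
  set (A' := fun i j => Csub (A i j) (outer u i j)) in *.
  assert (Hdiag : forall i, Cre (A' i i) = Cre (A i i) - Cnorm2 (u i)).
  { intro i. unfold A', Csub. rewrite <- Cre_outer_diag. simpl. ring. }
  assert (Hc' : (npos d (fun i => Cre (A' i i)) <= c)%nat).
  { enough (npos d (fun i => Cre (A' i i)) < npos d (fun i => Cre (A i i)))%nat by lia.
    apply npos_lt with k; auto.
    - intros j Hj. rewrite Hdiag. pose proof (Cnorm2_nonneg (u j)). lra.
    - rewrite Hdiag. unfold u; cbv beta. intro; lra. }
  destruct (IH A' HA' Hc') as [m [w Hw]].
  exists (S m), (fun e => if Nat.eqb e m then u else w e).
  intros i j Hi Hj. simpl. rewrite Nat.eqb_refl.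
  rewrite (sumC_ext m _ (fun e => outer (w e) i j)).
  - rewrite <- Hw by auto. unfold A', Csub. ring.
  - intros e He. destruct (Nat.eqb_spec e m); [lia|auto].
Qed.

Lemma psd_outer_decomposition d A : psd d A ->
  exists m w, mat_eq d A (fun i j => sumC m (fun e => outer (w e) i j)).
Proof. intro HA. apply (psd_outer_decomposition_count d _ A HA (le_n _)). Qed.

Lemma outer_scale c v i j :
  outer (fun k => Cmul (RtoC c) (v k)) i j = Cmul (RtoC (c * c)) (outer v i j).
Proof. unfold outer. rewrite Cconj_mul, Cconj_RtoC, RtoC_mul. ring. Qed.

Lemma normalize_decomposition d m (w : nat -> Vec) :
  exists m' p psi,
    (forall e, (e < m')%nat -> 0 < p e) /\
    (forall e, (e < m')%nat -> normalized d (psi e)) /\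
    sumR m' p = sumR m (fun e => sqnorm d (w e)) /\
    mat_eq d (fun i j => sumC m' (fun e => Cmul (RtoC (p e)) (outer (psi e) i j)))
             (fun i j => sumC m (fun e => outer (w e) i j)) /\
    sumR m' (fun e => p e * RI_pure d (psi e)) = sumR m (fun e => ent d (w e) / ln 2).
Proof.
  induction m as [|m IH].
  { exists O, (fun _ => 0), (fun _ _ => C0). simpl. repeat split; intros; try lia; reflexivity. }
  destruct IH as [m' [p [psi [Hp [Hn [Hsum [Hmat Hcost]]]]]]].
  set (s := sqnorm d (w m)).
  destruct (Rlt_dec 0 s) as [Hs|Hs].
  - set (c := / sqrt s).
    assert (Hc : c * c = / s) by (unfold c; rewrite <- Rinv_mult, sqrt_sqrt; lra).
    assert (Hc0 : c <> 0) by (apply Rinv_neq_0_compat, Rgt_not_eq, sqrt_lt_R0; auto).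
    set (v := fun i => Cmul (RtoC c) (w m i)).
    assert (Hv : normalized d v).
    { unfold normalized, v. fold (sqnorm d (fun i => Cmul (RtoC c) (w m i))).
      rewrite sqnorm_scale, Hc. fold s. field; lra. }
    exists (S m'), (fun e => if Nat.eqb e m' then s else p e),
      (fun e => if Nat.eqb e m' then v else psi e).
    simpl; rewrite Nat.eqb_refl. repeat split.
    + intros e He. destruct (Nat.eqb_spec e m'); auto. apply Hp; lia.
    + intros e He. destruct (Nat.eqb_spec e m'); auto. apply Hn; lia.
    + rewrite <- Hsum. f_equal.
      apply sumR_ext; intros e He. destruct (Nat.eqb_spec e m'); [lia|auto].
    + intros i j Hi Hj. rewrite <- Hmat by auto. f_equal.
      * apply sumC_ext; intros e He. destruct (Nat.eqb_spec e m'); [lia|auto].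
      * unfold v. rewrite outer_scale, Hc.
        transitivity (Cmul (RtoC (s * / s)) (outer (w m) i j)); [rewrite RtoC_mul; ring|].
        replace (s * / s) with 1 by (field; lra). C_ext_ring.
    + rewrite <- Hcost. f_equal.
      * apply sumR_ext; intros e He. destruct (Nat.eqb_spec e m'); [lia|auto].
      * pose proof ln2_pos.
        replace (RI_pure d v) with (ent d v / ln 2)
          by (rewrite (ent_normalized d v Hv); field; lra).
        unfold v. rewrite ent_scale, Hc by auto. field. lra.
  - assert (Hs0 : s = 0) by (pose proof (sqnorm_nonneg d (w m)) as Hs'; fold s in Hs'; lra).
    pose proof (sqnorm_eq0 d (w m) Hs0) as Hz.
    exists m', p, psi. simpl. repeat split; auto.
    + rewrite Hsum. fold s; rewrite Hs0; ring.
    + intros i j Hi Hj. rewrite Hmat by auto. unfold outer. rewrite (Hz i Hi). C_ext_ring.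
    + rewrite Hcost. replace (ent d (w m)) with 0; [unfold Rdiv; ring|].
      unfold ent. rewrite sumR_zero; [ring|]. intros i Hi. rewrite (Hz i Hi).
      unfold xlnx_rel. rewrite Cnorm2_C0. destruct (Rlt_dec 0 0); [lra|auto].
Qed.

Lemma RI_pure_nonneg d psi : normalized d psi -> 0 <= RI_pure d psi.
Proof.
  intro Hn. pose proof ln2_pos. pose proof (ent_nonneg d psi) as He.
  rewrite ent_normalized in He by auto. nra.
Qed.

Lemma RI_costs_nonneg d rho r : RI_costs d rho r -> 0 <= r.
Proof.
  intros [m [p [psi [[Hp [_ [Hn _]]] ->]]]]. apply sumR_nonneg. intros e He.
  pose proof (Hp e He). pose proof (RI_pure_nonneg d (psi e) (Hn e He)). nra.
Qed.

Lemma RI_is_glb d rho : (exists r, RI_costs d rho r) -> is_glb (RI_costs d rho) (RI d rho).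
Proof.
  intros [r0 Hr0]. unfold RI. apply epsilon_spec.
  set (E := fun y => RI_costs d rho (- y)).
  assert (Hb : bound E).
  { exists 0. intros y Hy. pose proof (RI_costs_nonneg d rho _ Hy). lra. }
  assert (Hne : exists y, E y) by (exists (- r0); unfold E; rewrite Ropp_involutive; auto).
  destruct (completeness E Hb Hne) as [l [Hl1 Hl2]].
  exists (- l). split.
  - intros x Hx. assert (E (- x)) by (unfold E; rewrite Ropp_involutive; auto).
    pose proof (Hl1 _ H). lra.
  - intros b Hb'. enough (l <= - b) by lra. apply Hl2. intros y Hy. pose proof (Hb' _ Hy). lra.
Qed.

Lemma RI_le d rho r : RI_costs d rho r -> RI d rho <= r.
Proof. intro Hr. exact (proj1 (RI_is_glb d rho (ex_intro _ r Hr)) r Hr). Qed.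

Lemma density_RI_costs d rho : density d rho -> exists r, RI_costs d rho r.
Proof.
  intros [HA Ht].
  destruct (psd_outer_decomposition d rho HA) as [m [w Hw]].
  destruct (normalize_decomposition d m w) as [m' [p [psi [Hp [Hn [Hsum [Hmat _]]]]]]].
  exists (sumR m' (fun e => p e * RI_pure d (psi e))), m', p, psi.
  split; [|reflexivity]. repeat split; auto.
  - rewrite Hsum. unfold sqnorm. rewrite sumR_swap.
    transitivity (Cre (trace d rho)); [|rewrite Ht; reflexivity].
    unfold trace. rewrite Cre_sum. apply sumR_ext; intros i Hi.
    rewrite (Hw i i Hi Hi), Cre_sum. apply sumR_ext; intros e He. symmetry; apply Cre_outer_diag.
  - intros i j Hi Hj. rewrite Hmat by auto. apply Hw; auto.
Qed.

Lemma sandwich_decomposition d (A : Mat) rho m p psi :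
  pure_decomposition d rho m p psi -> forall a b,
  mat_mul d (mat_mul d A rho) (adjoint A) a b =
  sumC m (fun e => Cmul (RtoC (p e)) (outer (mat_apply d A (psi e)) a b)).
Proof.
  intros [_ [_ [_ Hr]]] a b. unfold mat_mul, adjoint, outer, mat_apply.
  transitivity (sumC d (fun k => sumC d (fun l => sumC m (fun e =>
     Cmul (Cmul (RtoC (p e)) (Cmul (A a l) (psi e l)))
          (Cmul (Cconj (A b k)) (Cconj (psi e k))))))).
  { apply sumC_ext; intros k Hk. rewrite sumC_mul_r. apply sumC_ext; intros l Hl.
    rewrite (Hr l k Hl Hk), sumC_mul_l, sumC_mul_r. apply sumC_ext; intros e He.
    unfold outer. ring. }
  rewrite sumC_swap, (sumC_ext d _ (fun l => sumC m (fun e => sumC d (fun k =>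
     Cmul (Cmul (RtoC (p e)) (Cmul (A a l) (psi e l)))
          (Cmul (Cconj (A b k)) (Cconj (psi e k))))))) by (intros; apply sumC_swap).
  rewrite sumC_swap. apply sumC_ext; intros e He.
  rewrite Cconj_sum, sumC_mul_sums, sumC_mul_l.
  apply sumC_ext; intros l Hl. rewrite sumC_mul_l. apply sumC_ext; intros k Hk.
  rewrite Cconj_mul. ring.
Qed.

Lemma kraus_prob_decomposition d A rho m p psi : pure_decomposition d rho m p psi ->
  kraus_prob d A rho = sumR m (fun e => p e * sqnorm d (mat_apply d A (psi e))).
Proof.
  intro HD. unfold kraus_prob, trace. rewrite Cre_sum.
  rewrite (sumR_ext d _ (fun a => sumR m (fun e => p e * Cnorm2 (mat_apply d A (psi e) a)))).
  - rewrite sumR_swap. apply sumR_ext; intros e He. unfold sqnorm. symmetry; apply sumR_mul_l.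
  - intros a Ha. rewrite (sandwich_decomposition d A rho m p psi HD a a), Cre_sum.
    apply sumR_ext; intros e He. unfold outer, Cnorm2; simpl; ring.
Qed.

(* The vectors [sqrt (p_e / P) A psi_e] decompose [kraus_post d A rho]. *)
Lemma kraus_post_RI_le d A rho m p psi : pure_decomposition d rho m p psi ->
  0 < kraus_prob d A rho ->
  kraus_prob d A rho * RI d (kraus_post d A rho) <=
  sumR m (fun e => p e * (ent d (mat_apply d A (psi e)) / ln 2)).
Proof.
  intros HD HP. set (P := kraus_prob d A rho) in *.
  pose proof HD as [Hpos _].
  assert (Hsq : forall e, (e < m)%nat -> sqrt (p e / P) * sqrt (p e / P) = p e / P).
  { intros e He. apply sqrt_sqrt. pose proof (Hpos e He). apply Rlt_le, Rdiv_lt_0_compat; auto. }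
  set (w := fun e i => Cmul (RtoC (sqrt (p e / P))) (mat_apply d A (psi e) i)).
  destruct (normalize_decomposition d m w) as [m' [p' [psi' [Hp' [Hn' [Hsum [Hmat Hcost]]]]]]].
  assert (HD' : pure_decomposition d (kraus_post d A rho) m' p' psi').
  { repeat split; auto.
    - rewrite Hsum. unfold w.
      rewrite (sumR_ext m _ (fun e => / P * (p e * sqnorm d (mat_apply d A (psi e))))).
      + rewrite <- sumR_mul_l, <- (kraus_prob_decomposition d A rho m p psi HD). fold P. field. lra.
      + intros e He. rewrite sqnorm_scale, Hsq by auto. unfold Rdiv; ring.
    - intros a b Ha Hb. rewrite Hmat by auto. unfold kraus_post, scale_mat.
      rewrite (sandwich_decomposition d A rho m p psi HD a b), sumC_mul_l. fold P.
      apply sumC_ext; intros e He. unfold w. rewrite outer_scale, Hsq by auto.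
      unfold Rdiv. rewrite RtoC_mul. ring. }
  pose proof (RI_le d _ _ (ex_intro _ m' (ex_intro _ p' (ex_intro _ psi' (conj HD' eq_refl)))))
    as HR.
  rewrite Hcost in HR.
  rewrite (sumR_ext m _ (fun e => / P * (p e * (ent d (mat_apply d A (psi e)) / ln 2)))) in HR.
  - rewrite <- sumR_mul_l in HR. apply Rmult_le_compat_l with (r := P) in HR; [|lra].
    rewrite <- Rmult_assoc, Rinv_r, Rmult_1_l in HR; lra.
  - intros e He. pose proof (Hpos e He). unfold w.
    rewrite ent_scale by (apply Rgt_not_eq, sqrt_lt_R0, Rdiv_lt_0_compat; auto).
    rewrite Hsq by auto. unfold Rdiv. ring.
Qed.

Theorem mainTheorem3 (d N : nat) (K : nat -> Mat) (rho : Mat) :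
  incoherent_kraus d N K ->
  density d rho ->
  RI d rho >=
    sumR N (fun n =>
      if Rlt_dec 0 (kraus_prob d (K n) rho)
      then kraus_prob d (K n) rho * RI d (kraus_post d (K n) rho)
      else 0).
Proof.
  intros HIK Hrho. apply Rle_ge.
  apply (proj2 (RI_is_glb d rho (density_RI_costs d rho Hrho))).
  intros c [m [p [psi [HD ->]]]]. pose proof HD as [Hp [_ [Hn _]]].
  pose proof ln2_pos.
  apply Rle_trans with
    (sumR N (fun n => sumR m (fun e => p e * (ent d (mat_apply d (K n) (psi e)) / ln 2)))).
  - apply sumR_le; intros n Hn'. destruct (Rlt_dec 0 (kraus_prob d (K n) rho)).
    + apply kraus_post_RI_le; auto.
    + apply sumR_nonneg; intros e He. pose proof (Hp e He).
      pose proof (ent_nonneg d (mat_apply d (K n) (psi e))).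
      apply Rmult_le_pos; [lra|]. apply Rmult_le_pos; [lra | apply Rlt_le, Rinv_0_lt_compat; lra].
  - rewrite sumR_swap. apply sumR_le; intros e He.
    replace (RI_pure d (psi e)) with (ent d (psi e) / ln 2)
      by (rewrite ent_normalized by auto; field; lra).
    unfold Rdiv. rewrite <- sumR_mul_l, <- sumR_mul_r.
    apply Rmult_le_compat_l; [pose proof (Hp e He); lra|].
    apply Rmult_le_compat_r; [apply Rlt_le, Rinv_0_lt_compat; lra|].
    apply ent_kraus_le, Hn; auto.
Qed.
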